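(* Let $w\in\Sigma^*$ label a path in the NFA $\mathcal{A}$ from a state $A$ to a state $A'$. Then this path is unique: whenever $w=uv$ and $A\xrightarrow{u}B\xrightarrow{v}A'$ and $A\xrightarrow{u}B'\xrightarrow{v}A'$ are paths in $\mathcal{A}$, then $B=B'$.
   Context: $\Sigma$ is a finite alphabet with an involution $a\mapsto\bar a$ ($\bar{\bar a}=a$), extended to words by $\overline{a_1\cdots a_m}=\bar a_m\cdots\bar a_1$. $\kappa$ is a fixed positive integer. $\mathcal{A}_1=(Q_1,\Sigma,E_1,\{q_{01}\},F_1)$ and $\mathcal{A}_2=(Q_2,\Sigma,E_2,\{q_{02}\},F_2)$ are complete DFAs; $p\cdot w$ is the state reached from $p$ on $w$. Construction of $\mathcal{A}$: $Q_{12}=\{(q_{01}\cdot w,q_{02}\cdot w):w\in\Sigma^*\}$ with $(p_1,p_2)\cdot w=(p_1\cdot w,p_2\cdot w)$. For $(p_1,p_2,q_1,q_2)\in Q_1\times Q_2\times Q_1\times Q_2$ let $B(p_1,p_2,q_1,q_2)=\{w:p_1\cdot w=q_1,\ p_2\cdot\bar w=q_2\}$; the quadruple is a basic bridge if this set is nonempty. States of $\mathcal{A}$ are all $((p_1,p_2),q_1,q_2,\ell)$ with $(p_1,p_2)\in Q_{12}$, $q_i\in Q_i$, $\ell\in\{0,\dots,\kappa\}$, $(p_1,p_2,q_1,q_2)$ a basic bridge. For $a\in\Sigma$, $P\in Q_{12}$, $q_i\in Q_i$, there is an $a$-arc from $(P,q_1\cdot\bar a,q_2\cdot\bar a,\ell)$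 to $(P\cdot a,q_1,q_2,\ell')$, provided both are states, exactly when: $\ell=\ell'=0$ and $q_1\cdot\bar a\notin F_1$, $q_2\cdot\bar a\notin F_2$; or $\ell=0,\ell'=1$ and ($q_1\cdot\bar a\in F_1$ or $q_2\cdot\bar a\in F_2$); or $1\le\ell<\kappa$ and $\ell'=\ell+1$. Initial states: $((q_{01},q_{02}),q_1',q_2',0)$; final states: those with $\ell=\kappa$. *)

From mathcomp Require Import all_boot.
Set Implicit Arguments. Unset Strict Implicit. Unset Printing Implicit Defensive.

Record dfa (S : finType) := DFA {
  dstate : finType;
  dtrans : dstate -> S -> dstate;
  dinit  : dstate;
  dfinal : {set dstate} }.

Definition run (S : finType) (D : dfa S) (p : dstate D) (w : seq S) : dstate D :=
  foldl (@dtrans S D) p w.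

Definition wbar (S : Type) (bar : S -> S) (w : seq S) : seq S := rev (map bar w).

Section Construction.
Variables (S : finType) (bar : S -> S) (kappa : nat) (A1 A2 : dfa S).

Definition Q12 (P : dstate A1 * dstate A2) : Prop :=
  exists w, (run (dinit A1) w, run (dinit A2) w) = P.

Definition basic_bridge (p1 : dstate A1) (p2 : dstate A2)
  (q1 : dstate A1) (q2 : dstate A2) : Prop :=
  exists w, run p1 w = q1 /\ run p2 (wbar bar w) = q2.

Definition astate : Type :=
  ((dstate A1 * dstate A2) * dstate A1 * dstate A2 * nat)%type.

Definition is_state (s : astate) : Prop :=
  let: (P, q1, q2, l) := s in
  Q12 P /\ basic_bridge P.1 P.2 q1 q2 /\ l <= kappa.

Definition arc (a : S) (s t : astate) : Prop :=
  let: (P, r1, r2, l) := s in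
  let: (P', q1, q2, l') := t in
  [/\ is_state s, is_state t,
      P' = (dtrans P.1 a, dtrans P.2 a),
      r1 = dtrans q1 (bar a) & r2 = dtrans q2 (bar a)] /\
  [\/ [/\ l = 0, l' = 0, r1 \notin dfinal A1 & r2 \notin dfinal A2],
      [/\ l = 0, l' = 1 & (r1 \in dfinal A1 \/ r2 \in dfinal A2)]
    | 1 <= l < kappa /\ l' = l.+1].

Inductive apath : astate -> seq S -> astate -> Prop :=
  | apath_nil s : is_state s -> apath s [::] s
  | apath_cons a w s s' t : arc a s s' -> apath s' w t -> apath s (a :: w) t.

End Construction.

From mathcomp Require Import all_boot.
(* Imported after [all_boot] so that [arc] is not [path.arc]. *)

Set Implicit Arguments.
Unset Strict Implicit.
Unset Printing Implicit Defensive.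

(* An [a]-arc into a state with DFA components (q1, q2) must leave
   from components (q1 . bar a, q2 . bar a), so along paths labelled [v] ending
   at the same state the DFA components are determined backwards.  Conversely
   the source of an arc and the DFA components of its target determine the
   target: the pair component moves forward by [a] and the level is a function
   of the source.  Hence two paths labelled [u] from the same state whose ends
   agree on the DFA components end at the same state. *)

Section Determinism.
Variables (S : finType) (bar : S -> S) (kappa : nat) (A1 A2 : dfa S).

Local Notation astate := (astate A1 A2).
Local Notation arc := (arc bar kappa).
Local Notation apath := (apath bar kappa).

Definition dfa_part (s : astate) : dstate A1 * dstate A2 := (s.1.1.2, s.1.2).

Definition next_level (s : astate) : nat :=
  let: (_, r1, r2, l) := s in
  if l == 0 then nat_of_bool ((r1 \in dfinal A1) || (r2 \in dfinal A2)) else l.+1.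

Lemma arc_dfa_part_src a s t :
  arc a s t -> dfa_part s = (dtrans (dfa_part t).1 (bar a), dtrans (dfa_part t).2 (bar a)).
Proof.
by case: s t => [[[P r1] r2] l] [[[P' q1] q2] l'] [[_ _ _ -> ->] _].
Qed.

Lemma arc_tgt a s t :
  arc a s t -> t = (dtrans s.1.1.1.1 a, dtrans s.1.1.1.2 a,
                    (dfa_part t).1, (dfa_part t).2, next_level s).
Proof.
case: s t => [[[P r1] r2] l] [[[P' q1] q2] l'] [[_ _ -> _ _] /= Hlevel].
case: Hlevel => [[-> -> /negbTE -> /negbTE ->] | [-> -> Hfin] | [/andP[l_gt0 _] ->]] //.
- by case: Hfin => ->; rewrite ?orbT.
- by case: l l_gt0.
Qed.

Lemma arc_functional a s t t' :
  arc a s t -> arc a s t' -> dfa_part t = dfa_part t' -> t = t'.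
Proof. by move=> /arc_tgt -> /arc_tgt -> /= [-> ->]. Qed.

Lemma apath_nil_inv (s t : astate) : apath s [::] t -> t = s.
Proof. by move Ew: [::] => w p; case: p Ew. Qed.

Lemma apath_cons_inv (s : astate) a w t :
  apath s (a :: w) t -> exists2 s', arc a s s' & apath s' w t.
Proof.
move Ew: (a :: w) => w' p; case: p Ew => // a' w'' ? s' ? arc_s p [-> ->].
by exists s'.
Qed.

Lemma apath_dfa_part_src s s' w t t' :
  apath s w t -> apath s' w t' -> dfa_part t = dfa_part t' -> dfa_part s = dfa_part s'.
Proof.
elim: w s s' => [|a w IHw] s s' p p' eq_end.
  by rewrite -(apath_nil_inv p) -(apath_nil_inv p').
case/apath_cons_inv: p => x arc_x p; case/apath_cons_inv: p' => x' arc_x' p'.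
rewrite (arc_dfa_part_src arc_x) (arc_dfa_part_src arc_x').
by rewrite (IHw _ _ p p' eq_end).
Qed.

Lemma apath_functional s w t t' :
  apath s w t -> apath s w t' -> dfa_part t = dfa_part t' -> t = t'.
Proof.
elim: w s => [|a w IHw] s p p' eq_end.
  by rewrite (apath_nil_inv p) (apath_nil_inv p').
case/apath_cons_inv: p => x arc_x p; case/apath_cons_inv: p' => x' arc_x' p'.
have eq_x : x = x' by apply: arc_functional arc_x arc_x' (apath_dfa_part_src p p' eq_end).
by rewrite eq_x in p; apply: IHw p p' eq_end.
Qed.

End Determinism.

Theorem lemma2 (S : finType) (bar : S -> S) (Hbar : involutive bar)
  (kappa : nat) (Hkappa : 0 < kappa) (A1 A2 : dfa S)
  (A A' : astate A1 A2) (w : seq S)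
  (Hw : apath bar kappa A (w) A') :
  forall (u v : seq S) (B B' : astate A1 A2),
    w = u ++ v ->
    apath bar kappa A u B -> apath bar kappa B v A' ->
    apath bar kappa A u B' -> apath bar kappa B' v A' ->
    B = B'.
Proof.
move=> u v B B' _ AuB BvA' AuB' B'vA'.
apply: apath_functional AuB AuB' _.
exact: apath_dfa_part_src BvA' B'vA' erefl.
Qed.
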